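(* Let $H$ be a pre-Schreier monoid. Then $1s\Rightarrow 0s$, $3s\Rightarrow 0s$, $1s\Leftrightarrow 2s$, $2s\Rightarrow 3s$, $1s\Rightarrow 4s$, $2s\Rightarrow 5s$, $3s\Rightarrow 6s$, $4s\Leftrightarrow 5s$, $4s\Rightarrow 4's$, $5s\Rightarrow 5's$.
   Context: A monoid means a commutative cancellative monoid (written multiplicatively); $H^{\ast}$ is its unit group, $\mathbb{N}=\{1,2,\dots\}$, $\mathbb{N}_0=\{0,1,2,\dots\}$. Elements are relatively prime ($a\perp b$) if all their common divisors are units. $\mathrm{Sqf}\,H$: elements not of the form $b^2c$ with $b,c\in H$, $b\notin H^{\ast}$. $H$ is pre-Schreier if for all $a,b,c\in H$ with $a\mid bc$ there exist $a_1,a_2\in H$ with $a=a_1a_2$, $a_1\mid b$, $a_2\mid c$. The conditions, each required for every $a\in H$: 0s: $a=s_1\cdots s_n$ for some $n\in\mathbb{N}$, $s_i\in\mathrm{Sqf}\,H$; 1s: $a=s_1s_2^2\cdots s_n^n$ with $n\in\mathbb{N}$, $s_i\in\mathrm{Sqf}\,H$, $s_i\perp s_j$ for $i\ne j$; 2s: $a=s_1\cdots s_n$ with $n\in\mathbb{N}$, $s_i\in\mathrm{Sqf}\,H$, $s_i\mid s_{i+1}$ for $i<n$; 3s: $a=s_0s_1^2s_2^{2^2}\cdots s_n^{2^n}$ with $n\in\mathbb{N}_0$, $s_i\in\mathrm{Sqf}\,H$; 4s: $a=bc$ with $b\in H$, $c\in\mathrm{Sqf}\,H$, $b\perp c$,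 and some $d\in\mathrm{Sqf}\,H$ with $d^2\mid b$, $b\mid d^n$ for some $n\in\mathbb{N}$; 4's: $a=bc$ with $b\in H$, $c\in\mathrm{Sqf}\,H$, $b\perp c$, and every $d\in\mathrm{Sqf}\,H$ with $d\mid b$ satisfies $d^2\mid b$; 5s: $a=bc$ with $b\in H$, $c\in\mathrm{Sqf}\,H$ and $a\mid c^n$ for some $n\in\mathbb{N}$; 5's: $a=bc$ with $b\in H$, $c\in\mathrm{Sqf}\,H$ and every $d\in\mathrm{Sqf}\,H$ with $d\mid a$ satisfies $d\mid c$; 6s: $a=b^2c$ with $b\in H$, $c\in\mathrm{Sqf}\,H$. *)

From Stdlib Require Import Arith.

Record CCMonoid := {
  carrier :> Type;
  mul : carrier -> carrier -> carrier;
  one : carrier;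
  mulA : forall x y z, mul x (mul y z) = mul (mul x y) z;
  mulC : forall x y, mul x y = mul y x;
  mul1 : forall x, mul one x = x;
  mulK : forall x y z, mul x y = mul x z -> y = z
}.

Section Defs.
Variable H : CCMonoid.
Local Notation "x * y" := (mul H x y).

Definition is_unit (x : H) : Prop := exists y : H, x * y = one H.

Definition divides (a b : H) : Prop := exists c : H, b = a * c.

Definition rel_prime (a b : H) : Prop :=
  forall d : H, divides d a -> divides d b -> is_unit d.

Definition Sqf (a : H) : Prop :=
  ~ (exists b c : H, a = b * b * c /\ ~ is_unit b).

Fixpoint pow (x : H) (n : nat) : H :=
  match n with O => one H | S k => x * pow x k end.

Fixpoint prod_from (f : nat -> H) (lo len : nat) : H :=
  match len with
  | O => one H
  | S k => f lo * prod_from f (S lo) k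
  end.

Definition prod_range (f : nat -> H) (lo hi : nat) : H :=
  prod_from f lo (S hi - lo).

Definition pre_Schreier : Prop :=
  forall a b c : H, divides a (b * c) ->
    exists a1 a2 : H, a = a1 * a2 /\ divides a1 b /\ divides a2 c.

Definition cond0s : Prop := forall a : H,
  exists (n : nat) (s : nat -> H), 1 <= n /\
    (forall i, 1 <= i <= n -> Sqf (s i)) /\
    a = prod_range s 1 n.

Definition cond1s : Prop := forall a : H,
  exists (n : nat) (s : nat -> H), 1 <= n /\
    (forall i, 1 <= i <= n -> Sqf (s i)) /\
    (forall i j, 1 <= i <= n -> 1 <= j <= n -> i <> j -> rel_prime (s i) (s j)) /\
    a = prod_range (fun i => pow (s i) i) 1 n.

Definition cond2s : Prop := forall a : H,
  exists (n : nat) (s : nat -> H), 1 <= n /\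
    (forall i, 1 <= i <= n -> Sqf (s i)) /\
    (forall i, 1 <= i < n -> divides (s i) (s (S i))) /\
    a = prod_range s 1 n.

Definition cond3s : Prop := forall a : H,
  exists (n : nat) (s : nat -> H),
    (forall i, i <= n -> Sqf (s i)) /\
    a = prod_range (fun i => pow (s i) (2 ^ i)) 0 n.

Definition cond4s : Prop := forall a : H,
  exists b c : H, a = b * c /\ Sqf c /\ rel_prime b c /\
    exists d : H, Sqf d /\ divides (pow d 2) b /\
      exists n : nat, 1 <= n /\ divides b (pow d n).

Definition cond4's : Prop := forall a : H,
  exists b c : H, a = b * c /\ Sqf c /\ rel_prime b c /\
    forall d : H, Sqf d -> divides d b -> divides (pow d 2) b.

Definition cond5s : Prop := forall a : H,
  exists b c : H, a = b * c /\ Sqf c /\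
    exists n : nat, 1 <= n /\ divides a (pow c n).

Definition cond5's : Prop := forall a : H,
  exists b c : H, a = b * c /\ Sqf c /\
    forall d : H, Sqf d -> divides d a -> divides d c.

Definition cond6s : Prop := forall a : H,
  exists b c : H, a = pow b 2 * c /\ Sqf c.

End Defs.

From Stdlib Require Import Arith List Lia Permutation Classical Mergesort.
Import ListNotations.

(* Say that a is a chain product if a = t_1 t_2 ... t_n with t_n | ... | t_1 and t_1
   squarefree.  Putting t_k = s_k s_(k+1) ... s_n identifies chain products with
   the 1s-decompositions s_1 s_2^2 ... s_n^n (in a pre-Schreier monoid a product of
   pairwise coprime squarefree elements is squarefree), and reversing the chain
   gives the 2s-decompositions.  Writing t_(2k-1) t_(2k) = u_k t_(2k)^2 halves a
   chain, which iterated gives 3s; a chain product divides t_1^n, which gives 5s,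
   and splitting off t_1 = t_2 u gives 4s.  Moving the squarefree part of b from
   b to c and back exchanges 4s and 5s, and the primed conditions follow because
   in a pre-Schreier monoid a squarefree divisor of d^n divides d. *)

Section CCMonoidTheory.

Variable H : CCMonoid.

Declare Scope monoid_scope.
Local Notation "x * y" := (mul H x y) : monoid_scope.
Local Notation "a %| b" := (divides H a b) (at level 70, no associativity) : monoid_scope.
Local Open Scope monoid_scope.

Definition lprod (l : list H) : H := fold_right (mul H) (one H) l.

Lemma lprod_app l1 l2 : lprod (l1 ++ l2) = lprod l1 * lprod l2.
Proof.
  induction l1 as [|x l1 IH]; simpl; [now rewrite mul1|].
  now rewrite IH, mulA.
Qed.

Lemma lprod_perm l1 l2 : Permutation l1 l2 -> lprod l1 = lprod l2.
Proof.
  induction 1; simpl; try congruence.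
  now rewrite !mulA, (mulC H y x).
Qed.

Lemma lprod_rev l : lprod (rev l) = lprod l.
Proof. apply lprod_perm, Permutation_sym, Permutation_rev. Qed.

(* Reflexive AC normalisation: both sides are reified over a common list of
   atoms and compared through their sorted lists of atom indices. *)
Inductive mterm := MAtom (n : nat) | MOne | MMul (s t : mterm).

Fixpoint meval (env : list H) (t : mterm) : H :=
  match t with
  | MAtom n => nth n env (one H)
  | MOne => one H
  | MMul s t => meval env s * meval env t
  end.

Fixpoint matoms (t : mterm) : list nat :=
  match t with
  | MAtom n => [n]
  | MOne => []
  | MMul s t => matoms s ++ matoms t
  end.

Lemma meval_lprod env t :
  meval env t = lprod (map (fun n => nth n env (one H)) (matoms t)).
Proof.
  induction t as [n| |s IHs t IHt]; simpl.
  - now rewrite mulC, mul1.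
  - reflexivity.
  - now rewrite map_app, lprod_app, IHs, IHt.
Qed.

Lemma meval_sorted_atoms env s t :
  NatSort.sort (matoms s) = NatSort.sort (matoms t) -> meval env s = meval env t.
Proof.
  intro E. rewrite !meval_lprod. apply lprod_perm, Permutation_map.
  rewrite (NatSort.Permuted_sort (matoms s)), E.
  apply Permutation_sym, NatSort.Permuted_sort.
Qed.

Ltac mfind x l :=
  lazymatch l with
  | cons x _ => constr:(O)
  | cons _ ?r => let n := mfind x r in constr:(S n)
  end.

Ltac mcollect t env :=
  lazymatch t with
  | mul _ ?a ?b => let env1 := mcollect a env in mcollect b env1
  | one _ => env
  | _ => match constr:(tt) with
         | _ => let _ := mfind t env in env
         | _ => constr:(cons t env)
         end
  end.

Ltac mreify env t :=
  lazymatch t with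
  | mul _ ?a ?b =>
      let ea := mreify env a in let eb := mreify env b in constr:(MMul ea eb)
  | one _ => constr:(MOne)
  | _ => let n := mfind t env in constr:(MAtom n)
  end.

Ltac monoid_ac :=
  lazymatch goal with
  | |- @eq ?T ?l ?r =>
      let env0 := mcollect l (@nil T) in
      let env := mcollect r env0 in
      let el := mreify env l in
      let er := mreify env r in
      change (meval env el = meval env er);
      apply meval_sorted_atoms; vm_compute; reflexivity
  end.

Lemma dvd_refl a : a %| a.
Proof. exists (one H). monoid_ac. Qed.

Lemma dvd_trans a b c : a %| b -> b %| c -> a %| c.
Proof. intros [x ->] [y ->]. exists (x * y). monoid_ac. Qed.

Lemma dvd_mulr a b : a %| a * b.
Proof. now exists b. Qed.

Lemma dvd_mull a b : b %| a * b.
Proof. exists a. monoid_ac. Qed.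

Lemma dvd_mul a b c d : a %| b -> c %| d -> a * c %| b * d.
Proof. intros [x ->] [y ->]. exists (x * y). monoid_ac. Qed.

Lemma one_dvd a : one H %| a.
Proof. exists a. now rewrite mul1. Qed.

Lemma dvd_mul2l a b c : c * a %| c * b -> a %| b.
Proof. intros [x E]. exists x. apply (mulK H c). rewrite E. monoid_ac. Qed.

Lemma is_unit_one : is_unit H (one H).
Proof. exists (one H). apply mul1. Qed.

Lemma unit_dvd u a : is_unit H u -> u %| a.
Proof. intros [v Hv]. exists (v * a). now rewrite mulA, Hv, mul1. Qed.

Lemma dvd_unit a u : a %| u -> is_unit H u -> is_unit H a.
Proof. intros [x ->] [v Hv]. exists (x * v). rewrite <- Hv. monoid_ac. Qed.

Lemma unit_mul a b : is_unit H a -> is_unit H b -> is_unit H (a * b).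
Proof.
  intros [x Hx] [y Hy]. exists (x * y).
  transitivity ((a * x) * (b * y)); [monoid_ac|]. now rewrite Hx, Hy, mul1.
Qed.

Lemma pow1 a : pow H a 1 = a.
Proof. simpl. monoid_ac. Qed.

Lemma pow2 a : pow H a 2 = a * a.
Proof. simpl. monoid_ac. Qed.

Lemma powD a m n : pow H a (m + n) = pow H a m * pow H a n.
Proof. induction m as [|m IH]; simpl; [now rewrite mul1|]. rewrite IH. monoid_ac. Qed.

Lemma powMn a b n : pow H (a * b) n = pow H a n * pow H b n.
Proof. induction n as [|n IH]; simpl; [now rewrite mul1|]. rewrite IH. monoid_ac. Qed.

Lemma pow_pow2S a i : pow H a (2 ^ S i) = pow H (pow H a (2 ^ i)) 2.
Proof. rewrite pow2, <- powD. f_equal. simpl. lia. Qed.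

Lemma pow_dvd a b n : a %| b -> pow H a n %| pow H b n.
Proof. intro D. induction n; simpl; [apply dvd_refl | now apply dvd_mul]. Qed.

Lemma Sqf_dvd s d : Sqf H s -> d %| s -> Sqf H d.
Proof.
  intros Ss [e ->] [b [c [E Nb]]]. apply Ss. exists b, (c * e).
  split; [rewrite E; monoid_ac | exact Nb].
Qed.

Lemma Sqf_sq s b : Sqf H s -> b * b %| s -> is_unit H b.
Proof. intros Ss [c E]. apply NNPP. intro Nb. apply Ss. now exists b, c. Qed.

Lemma Sqf_unit u : is_unit H u -> Sqf H u.
Proof.
  intros Hu [b [c [E Nb]]]. apply Nb, (dvd_unit _ u); [|exact Hu].
  rewrite E. exists (b * c). monoid_ac.
Qed.

Lemma Sqf_one : Sqf H (one H).
Proof. apply Sqf_unit, is_unit_one. Qed.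

Lemma Sqf_rel_prime s t : Sqf H (s * t) -> rel_prime H s t.
Proof. intros Sst d [x ->] [y ->]. apply (Sqf_sq _ _ Sst). exists (x * y). monoid_ac. Qed.

Lemma rel_prime_sym a b : rel_prime H a b -> rel_prime H b a.
Proof. intros R d Db Da. auto. Qed.

Lemma rel_prime_dvdl a b d : rel_prime H a b -> d %| a -> rel_prime H d b.
Proof. intros R Da e De Db. apply R; [apply (dvd_trans e d a)|]; assumption. Qed.

Lemma rel_prime_dvdr a b d : rel_prime H a b -> d %| b -> rel_prime H a d.
Proof. intros R Db e Da De. apply R; [|apply (dvd_trans e d b)]; assumption. Qed.

Lemma rel_prime_unit a u : is_unit H u -> rel_prime H a u.
Proof. intros Hu d _ Du. exact (dvd_unit d u Du Hu). Qed.

Lemma prod_from_ext f g lo len :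
  (forall i, lo <= i < lo + len -> f i = g i) -> prod_from H f lo len = prod_from H g lo len.
Proof.
  revert lo; induction len as [|len IH]; intros lo E; simpl; [reflexivity|].
  rewrite (E lo) by lia. f_equal. apply IH. intros i Hi. apply E. lia.
Qed.

Lemma prod_from_shift f lo len :
  prod_from H f (S lo) len = prod_from H (fun i => f (S i)) lo len.
Proof. revert lo; induction len as [|len IH]; intros lo; simpl; [|rewrite IH]; reflexivity. Qed.

Lemma prod_fromM f g lo len :
  prod_from H (fun i => f i * g i) lo len = prod_from H f lo len * prod_from H g lo len.
Proof.
  revert lo; induction len as [|len IH]; intros lo; simpl; [now rewrite mul1|].
  rewrite IH. monoid_ac.
Qed.

Lemma prod_from_seq f lo len : prod_from H f lo len = lprod (map f (seq lo len)).
Proof. revert lo; induction len as [|len IH]; intros lo; simpl; [|rewrite IH]; reflexivity. Qed.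

Lemma prod_from_nth L lo : prod_from H (fun i => nth (i - lo) L (one H)) lo (length L) = lprod L.
Proof.
  revert lo; induction L as [|x L IH]; intros lo; simpl; [reflexivity|].
  rewrite Nat.sub_diag, <- (IH (S lo)). f_equal.
  apply prod_from_ext. intros i Hi. now replace (i - lo) with (S (i - S lo)) by lia.
Qed.

Lemma prod_range1 f n : prod_range H f 1 n = prod_from H f 1 n.
Proof. unfold prod_range. simpl. now rewrite Nat.sub_0_r. Qed.

Lemma dvd_prod_from f lo len i : lo <= i < lo + len -> f i %| prod_from H f lo len.
Proof.
  revert lo; induction len as [|len IH]; intros lo Hi; simpl; [lia|].
  destruct (Nat.eq_dec i lo) as [->|Ne]; [apply dvd_mulr|].
  apply (dvd_trans _ (prod_from H f (S lo) len)); [apply IH; lia | apply dvd_mull].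
Qed.

Lemma dvd_prod_from2 f lo len i j : i <> j ->
  lo <= i < lo + len -> lo <= j < lo + len -> f i * f j %| prod_from H f lo len.
Proof.
  revert lo; induction len as [|len IH]; intros lo Nij Hi Hj; simpl; [lia|].
  destruct (Nat.eq_dec i lo) as [->|Ni]; [apply dvd_mul; [apply dvd_refl | apply dvd_prod_from; lia]|].
  destruct (Nat.eq_dec j lo) as [->|Nj].
  - rewrite mulC. apply dvd_mul; [apply dvd_refl | apply dvd_prod_from; lia].
  - apply (dvd_trans _ (prod_from H f (S lo) len)); [apply IH; lia | apply dvd_mull].
Qed.

Lemma Sqf_prod_from_rel_prime f lo len i j : Sqf H (prod_from H f lo len) -> i <> j ->
  lo <= i < lo + len -> lo <= j < lo + len -> rel_prime H (f i) (f j).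
Proof. intros S Nij Hi Hj. apply Sqf_rel_prime, (Sqf_dvd _ _ S), dvd_prod_from2; assumption. Qed.

(** * Pre-Schreier monoids *)

Section PreSchreier.

Hypothesis hS : pre_Schreier H.

Lemma Gauss_dvdl a b c : rel_prime H a b -> a %| b * c -> a %| c.
Proof.
  intros R D. destruct (hS _ _ _ D) as [a1 [a2 [-> [D1 [e ->]]]]].
  assert (U : is_unit H a1) by (apply R; [apply dvd_mulr | exact D1]).
  destruct U as [v Hv]. exists (v * e).
  transitivity ((a1 * v) * a2 * e); [now rewrite Hv, mul1 | monoid_ac].
Qed.

Lemma Gauss_dvd a b d : rel_prime H a b -> a %| d -> b %| d -> a * b %| d.
Proof.
  intros R [f ->] Db. destruct (Gauss_dvdl b a f (rel_prime_sym _ _ R) Db) as [g ->].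
  exists g. monoid_ac.
Qed.

Lemma rel_primeMr a b c : rel_prime H a b -> rel_prime H a c -> rel_prime H a (b * c).
Proof.
  intros Rb Rc d Da D. destruct (hS _ _ _ D) as [d1 [d2 [-> [D1 D2]]]].
  apply unit_mul.
  - apply Rb; [apply (dvd_trans _ (d1 * d2)); [apply dvd_mulr|]|]; assumption.
  - apply Rc; [apply (dvd_trans _ (d1 * d2)); [apply dvd_mull|]|]; assumption.
Qed.

Lemma rel_primeXr a b n : rel_prime H a b -> rel_prime H a (pow H b n).
Proof.
  intro R. induction n; simpl; [apply rel_prime_unit, is_unit_one | now apply rel_primeMr].
Qed.

Lemma rel_prime_prod_from a f lo len :
  (forall i, lo <= i < lo + len -> rel_prime H a (f i)) -> rel_prime H a (prod_from H f lo len).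
Proof.
  revert lo; induction len as [|len IH]; intros lo R; simpl.
  - apply rel_prime_unit, is_unit_one.
  - apply rel_primeMr; [apply R; lia | apply IH; intros; apply R; lia].
Qed.

Lemma Sqf_mul s t : Sqf H s -> Sqf H t -> rel_prime H s t -> Sqf H (s * t).
Proof.
  intros Ss St R [b [c [E Nb]]]. apply Nb.
  assert (Db : b %| s * t) by (rewrite E; exists (b * c); monoid_ac).
  destruct (hS _ _ _ Db) as [b1 [b2 [-> [D1 D2]]]].
  assert (Dsq : (b1 * b1) * (b2 * b2) %| s * t) by (rewrite E; exists c; monoid_ac).
  apply unit_mul.
  - apply (Sqf_sq s _ Ss), (Gauss_dvdl _ t).
    + assert (Rb1 : rel_prime H t b1) by exact (rel_prime_sym _ _ (rel_prime_dvdl _ _ _ R D1)).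
      exact (rel_prime_sym _ _ (rel_primeMr _ _ _ Rb1 Rb1)).
    + rewrite (mulC H t s). exact (dvd_trans _ _ _ (dvd_mulr _ _) Dsq).
  - apply (Sqf_sq t _ St), (Gauss_dvdl _ s).
    + assert (Rb2 : rel_prime H s b2) by exact (rel_prime_dvdr _ _ _ R D2).
      exact (rel_prime_sym _ _ (rel_primeMr _ _ _ Rb2 Rb2)).
    + exact (dvd_trans _ _ _ (dvd_mull _ _) Dsq).
Qed.

Lemma Sqf_prod_from f lo len :
  (forall i, lo <= i < lo + len -> Sqf H (f i)) ->
  (forall i j, lo <= i < lo + len -> lo <= j < lo + len -> i <> j -> rel_prime H (f i) (f j)) ->
  Sqf H (prod_from H f lo len).
Proof.
  revert lo; induction len as [|len IH]; intros lo Sf Rf; simpl; [apply Sqf_one|].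
  apply Sqf_mul.
  - apply Sf. lia.
  - apply IH; intros; [apply Sf | apply Rf]; lia.
  - apply rel_prime_prod_from. intros; apply Rf; lia.
Qed.

Lemma Sqf_dvd_pow e d n : Sqf H e -> e %| pow H d n -> e %| d.
Proof.
  revert e; induction n as [|n IH]; simpl; intros e Se D.
  - apply unit_dvd, (dvd_unit _ _ D), is_unit_one.
  - destruct (hS _ _ _ D) as [e1 [e2 [-> [D1 D2]]]].
    apply Gauss_dvd; [now apply Sqf_rel_prime | exact D1 |].
    apply IH; [apply (Sqf_dvd _ _ Se), dvd_mull | exact D2].
Qed.

(* [d] is the part of [c] on which [b] is supported. *)
Lemma Sqf_dvd_pow_split b c k : Sqf H c -> b %| pow H c k ->
  exists d c', c = d * c' /\ d %| b /\ b %| pow H d k /\ rel_prime H c' b.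
Proof.
  revert b; induction k as [|k IH]; intros b Sc Db.
  - exists (one H), c. split; [now rewrite mul1 | split; [apply one_dvd | split; [exact Db|]]].
    apply rel_prime_unit, (dvd_unit _ _ Db), is_unit_one.
  - destruct (hS _ _ _ Db) as [b1 [b2 [-> [D1 D2]]]].
    destruct (IH b2 Sc D2) as [d2 [c2 [-> [Dd2 [Db2 Rc2]]]]].
    destruct (hS _ _ _ D1) as [x [y [-> [Dx [c' ->]]]]].
    exists (d2 * y), c'.
    assert (R : rel_prime H (d2 * y) c') by (apply Sqf_rel_prime; rewrite <- mulA; exact Sc).
    split; [monoid_ac|]. split; [|split].
    + destruct Dd2 as [m ->]. exists (x * m). monoid_ac.
    + simpl. apply dvd_mul; [apply dvd_mul; [exact Dx | apply dvd_refl]|].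
      apply (dvd_trans _ _ _ Db2), pow_dvd, dvd_mulr.
    + apply rel_primeMr; [apply rel_primeMr|]; apply rel_prime_sym.
      * apply (rel_prime_dvdl _ _ _ R), (dvd_trans _ _ _ Dx), dvd_mulr.
      * apply (rel_prime_dvdl _ _ _ R), dvd_mull.
      * apply rel_prime_sym, (rel_prime_dvdl _ _ _ Rc2), dvd_mull.
Qed.

End PreSchreier.

(** * Divisor chains *)

Fixpoint dvd_chain (l : list H) : Prop :=
  match l with
  | [] => True
  | x :: r => hd (one H) r %| x /\ dvd_chain r
  end.

Definition sqf_chain_product (a : H) : Prop :=
  exists l, dvd_chain l /\ Sqf H (hd (one H) l) /\ a = lprod l.

Lemma dvd_chain_nth l : dvd_chain l <-> forall i, nth (S i) l (one H) %| nth i l (one H).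
Proof.
  induction l as [|x r IH]; simpl.
  - split; [intros _ [|i]; apply dvd_refl | trivial].
  - rewrite IH. split.
    + intros [Dx Dr] [|i]; [destruct r; assumption | apply Dr].
    + intros D. split; [specialize (D 0); destruct r; assumption | intro i; apply (D (S i))].
Qed.

Lemma dvd_chain_hd l x : dvd_chain l -> In x l -> x %| hd (one H) l.
Proof.
  induction l as [|y r IH]; simpl; [tauto|]. intros [Dy Dr] [->|Hx]; [apply dvd_refl|].
  exact (dvd_trans _ _ _ (IH Dr Hx) Dy).
Qed.

Lemma hd_dvd_lprod l : hd (one H) l %| lprod l.
Proof. destruct l; simpl; [apply dvd_refl | apply dvd_mulr]. Qed.

Lemma lprod_dvd_pow_hd l : dvd_chain l -> lprod l %| pow H (hd (one H) l) (length l).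
Proof.
  induction l as [|x r IH]; simpl; [intros _; apply dvd_refl|]. intros [Dx Dr].
  apply dvd_mul; [apply dvd_refl|]. exact (dvd_trans _ _ _ (IH Dr) (pow_dvd _ _ _ Dx)).
Qed.

Lemma sqf_chain_product_cons a : sqf_chain_product a ->
  exists x r, dvd_chain (x :: r) /\ Sqf H x /\ a = lprod (x :: r).
Proof.
  intros [[|x r] [D [Sx E]]]; [|now exists x, r].
  exists (one H), []. simpl in *. split; [split; [apply dvd_refl | trivial]|].
  split; [exact Sqf_one | now rewrite E, mul1].
Qed.

(* A chain [t_1, ..., t_n] corresponds to [s_1 s_2^2 ... s_n^n] via [t_k = s_k ... s_n]. *)
Lemma prod_from_pow_index r n :
  prod_from H (fun i => pow H (r i) i) 1 (S n)
  = prod_from H r 1 (S n) * prod_from H (fun i => pow H (r (S i)) i) 1 n.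
Proof.
  cbn [prod_from]. rewrite !(prod_from_shift _ 1), pow1.
  rewrite (prod_from_ext _ (fun i => r (S i) * pow H (r (S i)) i)) by reflexivity.
  rewrite prod_fromM. monoid_ac.
Qed.

Lemma chain_of_power_product r n : exists l, dvd_chain l /\
  hd (one H) l = prod_from H r 1 n /\ lprod l = prod_from H (fun i => pow H (r i) i) 1 n.
Proof.
  revert r; induction n as [|n IH]; intros r; [now exists [] |].
  destruct (IH (fun i => r (S i))) as [l [D [Hd Pl]]].
  exists (prod_from H r 1 (S n) :: l). simpl dvd_chain. split; [split|split]; [| exact D | reflexivity |].
  - rewrite Hd. cbn [prod_from]. rewrite (prod_from_shift _ 1). apply dvd_mull.
  - simpl lprod. now rewrite Pl, prod_from_pow_index.
Qed.

Lemma power_product_of_chain l : dvd_chain l -> exists r,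
  hd (one H) l = prod_from H r 1 (length l) /\
  lprod l = prod_from H (fun i => pow H (r i) i) 1 (length l).
Proof.
  induction l as [|x l IH]; [intros _; now exists (fun _ => one H)|].
  intros [[u Hu] Dl]. destruct (IH Dl) as [r [Hd Pl]].
  (* r' is the sequence u, r_1, r_2, ... indexed from 1 (its value at 0 is junk). *)
  set (r' i := match i with S (S k) => r (S k) | _ => u end).
  assert (ShiftR : prod_from H r' 2 (length l) = prod_from H r 1 (length l)).
  { rewrite prod_from_shift. apply prod_from_ext. intros [|i] Hi; [lia | reflexivity]. }
  assert (ShiftP : prod_from H (fun i => pow H (r' (S i)) i) 1 (length l)
                   = prod_from H (fun i => pow H (r i) i) 1 (length l)).
  { apply prod_from_ext. intros [|i] Hi; [lia | reflexivity]. }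
  assert (Hx : x = prod_from H r' 1 (S (length l))).
  { cbn [prod_from]. change (r' 1) with u. now rewrite ShiftR, <- Hd, Hu, mulC. }
  exists r'. split; [exact Hx|].
  cbn [length lprod fold_right]. rewrite prod_from_pow_index, ShiftP, <- Pl, <- Hx. reflexivity.
Qed.

Lemma chain_halving l : dvd_chain l -> exists t l',
  t %| hd (one H) l /\ dvd_chain l' /\ hd (one H) l' %| hd (one H) l /\
  (2 * length l' <= length l)%nat /\ lprod l = t * pow H (lprod l') 2.
Proof.
  remember (length l) as n eqn:En. revert l En.
  induction n as [n IH] using lt_wf_ind. intros [|x [|y r]] En D.
  - exists (one H), []. repeat split; try apply dvd_refl; simpl; [lia | monoid_ac].
  - exists x, []. repeat split; try apply dvd_refl; try apply one_dvd; simpl; [lia | monoid_ac].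
  - destruct D as [[u Hu] [Dy Dr]]. simpl in Hu, En.
    destruct (IH (length r) ltac:(lia) r eq_refl Dr) as [t [l' [Dt [Dl' [Dh [Len E]]]]]].
    exists (u * t), (y :: l'). simpl. split; [|split; [split|split; [|split]]].
    + rewrite Hu, (mulC H y u). apply dvd_mul; [apply dvd_refl | exact (dvd_trans _ _ _ Dt Dy)].
    + exact (dvd_trans _ _ _ Dh Dy).
    + exact Dl'.
    + rewrite Hu. apply dvd_mulr.
    + lia.
    + rewrite E, Hu, !pow2. monoid_ac.
Qed.

(** * The factorization conditions *)

Lemma chain_of_cond1s (hS : pre_Schreier H) : cond1s H -> forall a, sqf_chain_product a.
Proof.
  intros c1 a. destruct (c1 a) as [n [s [_ [Ss [Rs E]]]]].
  destruct (chain_of_power_product s n) as [l [D [Hd Pl]]].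
  exists l. split; [exact D | split].
  - rewrite Hd. apply (Sqf_prod_from hS); intros; [apply Ss | apply Rs]; lia.
  - now rewrite E, prod_range1.
Qed.

Lemma cond1s_of_chain : (forall a, sqf_chain_product a) -> cond1s H.
Proof.
  intros ch a. destruct (sqf_chain_product_cons a (ch a)) as [x [r [D [Sx E]]]].
  destruct (power_product_of_chain (x :: r) D) as [s [Hd Pl]].
  assert (Ss : Sqf H (prod_from H s 1 (length (x :: r)))) by (rewrite <- Hd; exact Sx).
  exists (length (x :: r)), s. split; [simpl; lia | split; [|split]].
  - intros i Hi. apply (Sqf_dvd _ _ Ss), dvd_prod_from. lia.
  - intros i j Hi Hj Nij. apply (Sqf_prod_from_rel_prime s 1 _ i j Ss Nij); lia.
  - now rewrite prod_range1, E.
Qed.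

Lemma chain_of_cond2s : cond2s H -> forall a, sqf_chain_product a.
Proof.
  intros c2 a. destruct (c2 a) as [n [s [Hn [Ss [Ds E]]]]].
  set (l := rev (map s (seq 1 n))).
  assert (Len : length l = n) by (unfold l; now rewrite length_rev, length_map, length_seq).
  assert (Hl : forall k, k < n -> nth k l (one H) = s (n - k)).
  { intros k Hk. unfold l. rewrite rev_nth, length_map, length_seq by (rewrite length_map, length_seq; lia).
    rewrite (nth_indep _ _ (s 0)) by (rewrite length_map, length_seq; lia).
    rewrite map_nth, seq_nth by lia. f_equal. lia. }
  exists l. split; [|split].
  - apply dvd_chain_nth. intro i. destruct (Nat.lt_ge_cases (S i) n) as [Hi|Hi].
    + rewrite !Hl by lia. replace (n - i) with (S (n - S i)) by lia. apply Ds. lia.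
    + rewrite (nth_overflow l) by lia. apply one_dvd.
  - replace (hd (one H) l) with (nth 0 l (one H)) by (destruct l; reflexivity).
    rewrite Hl by lia. apply Ss. lia.
  - unfold l. now rewrite E, prod_range1, prod_from_seq, lprod_rev.
Qed.

Lemma cond2s_of_chain : (forall a, sqf_chain_product a) -> cond2s H.
Proof.
  intros ch a. destruct (sqf_chain_product_cons a (ch a)) as [x [r [D [Sx E]]]].
  set (l := x :: r) in *. set (n := length l).
  assert (Hs : forall i, 1 <= i <= n -> nth (i - 1) (rev l) (one H) = nth (n - i) l (one H)).
  { intros i Hi. rewrite rev_nth by (unfold n in Hi; lia). f_equal. unfold n. lia. }
  exists n, (fun i => nth (i - 1) (rev l) (one H)). split; [unfold n, l; simpl; lia | split; [|split]].
  - intros i Hi. rewrite Hs by lia. apply (Sqf_dvd x _ Sx), (dvd_chain_hd l _ D), nth_In.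
    unfold n in Hi. lia.
  - intros i Hi. rewrite !Hs by lia. replace (n - i) with (S (n - S i)) by lia.
    apply dvd_chain_nth, D.
  - rewrite prod_range1, E, <- lprod_rev, <- (prod_from_nth (rev l) 1), length_rev. reflexivity.
Qed.

Definition sqf_binary_product (a : H) : Prop :=
  exists n s, (forall i, i <= n -> Sqf H (s i)) /\
    a = prod_range H (fun i => pow H (s i) (2 ^ i)) 0 n.

Lemma prod_range_pow2 s n :
  prod_range H (fun i => pow H (s i) (2 ^ i)) 0 n
  = s 0 * pow H (prod_from H (fun i => pow H (s (S i)) (2 ^ i)) 0 n) 2.
Proof.
  unfold prod_range. cbn [prod_from Nat.sub]. rewrite (prod_from_shift _ 0), pow1, pow2, <- prod_fromM.
  f_equal. apply prod_from_ext. intros i _. now rewrite pow_pow2S, pow2.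
Qed.

Lemma sqf_binary_product_one : sqf_binary_product (one H).
Proof.
  exists 0, (fun _ => one H). split; [intros; exact Sqf_one|].
  unfold prod_range. simpl. monoid_ac.
Qed.

Lemma sqf_binary_product_step t b :
  Sqf H t -> sqf_binary_product b -> sqf_binary_product (t * pow H b 2).
Proof.
  intros St [n [s [Ss ->]]].
  exists (S n), (fun i => match i with 0 => t | S k => s k end). split.
  - intros [|i] Hi; [exact St | apply Ss; lia].
  - symmetry. apply prod_range_pow2.
Qed.

Lemma binary_product_of_chain l :
  dvd_chain l -> Sqf H (hd (one H) l) -> sqf_binary_product (lprod l).
Proof.
  remember (length l) as n eqn:En. revert l En.
  induction n as [n IH] using lt_wf_ind. intros [|x r] En D Sx; [exact sqf_binary_product_one|].
  destruct (chain_halving _ D) as [t [l' [Dt [D' [Dh [Len ->]]]]]].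
  apply sqf_binary_product_step; [exact (Sqf_dvd _ _ Sx Dt)|].
  apply (IH (length l')); [simpl in *; lia | reflexivity | exact D' | exact (Sqf_dvd _ _ Sx Dh)].
Qed.

Lemma cond3s_of_chain : (forall a, sqf_chain_product a) -> cond3s H.
Proof. intros ch a. destruct (ch a) as [l [D [Sl ->]]]. exact (binary_product_of_chain l D Sl). Qed.

Lemma cond6s_of_cond3s : cond3s H -> cond6s H.
Proof.
  intros c3 a. destruct (c3 a) as [n [s [Ss E]]].
  exists (prod_from H (fun i => pow H (s (S i)) (2 ^ i)) 0 n), (s 0). split.
  - now rewrite E, prod_range_pow2, mulC.
  - apply Ss. lia.
Qed.

Definition sqf_product (a : H) : Prop := exists L, Forall (Sqf H) L /\ a = lprod L.

Lemma sqf_product_one : sqf_product (one H).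
Proof. now exists []. Qed.

Lemma sqf_productM a b : sqf_product a -> sqf_product b -> sqf_product (a * b).
Proof.
  intros [L1 [S1 ->]] [L2 [S2 ->]]. exists (L1 ++ L2).
  split; [now apply Forall_app | now rewrite lprod_app].
Qed.

Lemma sqf_product_pow x k : Sqf H x -> sqf_product (pow H x k).
Proof.
  intro Sx. induction k as [|k IH]; simpl; [exact sqf_product_one|].
  apply sqf_productM; [|exact IH]. exists [x]. split; [now constructor | simpl; monoid_ac].
Qed.

Lemma sqf_product_prod_from f lo len :
  (forall i, lo <= i < lo + len -> sqf_product (f i)) -> sqf_product (prod_from H f lo len).
Proof.
  revert lo; induction len as [|len IH]; intros lo Sf; simpl; [exact sqf_product_one|].
  apply sqf_productM; [apply Sf; lia | apply IH; intros; apply Sf; lia].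
Qed.

Lemma cond0s_of_sqf_product : (forall a, sqf_product a) -> cond0s H.
Proof.
  intros P a. destruct (P a) as [L [SL E]].
  set (L' := one H :: L).
  exists (length L'), (fun i => nth (i - 1) L' (one H)). split; [simpl; lia | split].
  - intros i Hi. apply (Forall_forall (Sqf H) L'); [now constructor; [exact Sqf_one|] | apply nth_In; lia].
  - rewrite prod_range1, prod_from_nth, E. simpl. now rewrite mul1.
Qed.

Lemma cond0s_of_cond2s : cond2s H -> cond0s H.
Proof. intros c2 a. destruct (c2 a) as [n [s [Hn [Ss [_ E]]]]]. now exists n, s. Qed.

Lemma cond0s_of_cond3s : cond3s H -> cond0s H.
Proof.
  intro c3. apply cond0s_of_sqf_product. intro a. destruct (c3 a) as [n [s [Ss ->]]].
  apply sqf_product_prod_from. intros i Hi. apply sqf_product_pow, Ss. lia.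
Qed.

Lemma cond4s_of_chain (hS : pre_Schreier H) : (forall a, sqf_chain_product a) -> cond4s H.
Proof.
  intros ch a. destruct (sqf_chain_product_cons a (ch a)) as [x [r [[[u Hu] D] [Sx E]]]].
  set (y := hd (one H) r) in *.
  assert (Sy : Sqf H y) by (apply (Sqf_dvd _ _ Sx); rewrite Hu; apply dvd_mulr).
  assert (Su : Sqf H u) by (apply (Sqf_dvd _ _ Sx); rewrite Hu; apply dvd_mull).
  assert (Ryu : rel_prime H y u) by (apply Sqf_rel_prime; rewrite <- Hu; exact Sx).
  assert (Bd : y * lprod r %| pow H y (S (length r))).
  { apply dvd_mul; [apply dvd_refl | exact (lprod_dvd_pow_hd r D)]. }
  exists (y * lprod r), u. split; [|split; [exact Su | split]].
  - rewrite E, Hu. simpl. monoid_ac.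
  - apply (rel_prime_dvdl _ _ _ (rel_prime_sym _ _ (rel_primeXr hS u y _ (rel_prime_sym _ _ Ryu))) Bd).
  - exists y. split; [exact Sy | split].
    + rewrite pow2. apply dvd_mul; [apply dvd_refl | apply hd_dvd_lprod].
    + exists (S (length r)). split; [lia | exact Bd].
Qed.

Lemma cond5s_of_chain : (forall a, sqf_chain_product a) -> cond5s H.
Proof.
  intros ch a. destruct (sqf_chain_product_cons a (ch a)) as [x [r [D [Sx E]]]].
  exists (lprod r), x. split; [now rewrite E, mulC | split; [exact Sx|]].
  exists (length (x :: r)). split; [simpl; lia|]. rewrite E. exact (lprod_dvd_pow_hd _ D).
Qed.

Lemma cond5s_of_cond4s (hS : pre_Schreier H) : cond4s H -> cond5s H.
Proof.
  intros c4 a. destruct (c4 a) as [b [c [E [Sc [R [d [Sd [Dd2 [n [Hn Db]]]]]]]]]].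
  assert (Dd : d %| b) by (rewrite pow2 in Dd2; exact (dvd_trans _ _ _ (dvd_mulr d d) Dd2)).
  destruct Dd as [e ->].
  exists e, (d * c). split; [rewrite E; monoid_ac | split].
  - apply (Sqf_mul hS _ _ Sd Sc), (rel_prime_dvdl _ _ _ R), dvd_mulr.
  - exists n. split; [exact Hn|]. rewrite E, powMn. apply dvd_mul; [exact Db|].
    destruct n as [|n]; [lia | apply dvd_mulr].
Qed.

Lemma cond4s_of_cond5s (hS : pre_Schreier H) : cond5s H -> cond4s H.
Proof.
  intros c5 a. destruct (c5 a) as [b [c [E [Sc [[|k] [Hk Da]]]]]]; [lia|].
  assert (Db : b %| pow H c k).
  { apply (dvd_mul2l _ _ c). rewrite (mulC H c b), <- E. exact Da. }
  destruct (Sqf_dvd_pow_split hS b c k Sc Db) as [d [c' [Ec [Ddb [Dbd R]]]]].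
  assert (Rdc : rel_prime H d c') by (apply Sqf_rel_prime; rewrite <- Ec; exact Sc).
  exists (b * d), c'. split; [rewrite E, Ec; monoid_ac | split; [|split]].
  - apply (Sqf_dvd _ _ Sc). rewrite Ec. apply dvd_mull.
  - apply rel_prime_sym, (rel_primeMr hS); [|apply rel_prime_sym]; assumption.
  - exists d. split; [apply (Sqf_dvd _ _ Sc); rewrite Ec; apply dvd_mulr | split].
    + rewrite pow2. apply dvd_mul; [exact Ddb | apply dvd_refl].
    + exists (S k). split; [lia|]. simpl. rewrite (mulC H b d). apply dvd_mul; [apply dvd_refl | exact Dbd].
Qed.

Lemma cond4's_of_cond4s (hS : pre_Schreier H) : cond4s H -> cond4's H.
Proof.
  intros c4 a. destruct (c4 a) as [b [c [E [Sc [R [d [Sd [Dd2 [n [Hn Db]]]]]]]]]].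
  exists b, c. split; [exact E | split; [exact Sc | split; [exact R|]]].
  intros e Se De.
  assert (Ded : e %| d) by exact (Sqf_dvd_pow hS e d n Se (dvd_trans _ _ _ De Db)).
  exact (dvd_trans _ _ _ (pow_dvd _ _ 2 Ded) Dd2).
Qed.

Lemma cond5's_of_cond5s (hS : pre_Schreier H) : cond5s H -> cond5's H.
Proof.
  intros c5 a. destruct (c5 a) as [b [c [E [Sc [n [Hn Da]]]]]].
  exists b, c. split; [exact E | split; [exact Sc|]].
  intros e Se De. exact (Sqf_dvd_pow hS e c n Se (dvd_trans _ _ _ De Da)).
Qed.

End CCMonoidTheory.

Theorem proposition4p3 (H : CCMonoid) (hS : pre_Schreier H) :
  (cond1s H -> cond0s H) /\
  (cond3s H -> cond0s H) /\
  (cond1s H <-> cond2s H) /\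
  (cond2s H -> cond3s H) /\
  (cond1s H -> cond4s H) /\
  (cond2s H -> cond5s H) /\
  (cond3s H -> cond6s H) /\
  (cond4s H <-> cond5s H) /\
  (cond4s H -> cond4's H) /\
  (cond5s H -> cond5's H).
Proof.
  pose proof (chain_of_cond1s H hS) as c1_chain.
  pose proof (chain_of_cond2s H) as c2_chain.
  repeat split; intro c.
  - apply cond0s_of_cond2s, cond2s_of_chain, c1_chain, c.
  - apply cond0s_of_cond3s, c.
  - apply cond2s_of_chain, c1_chain, c.
  - apply cond1s_of_chain, c2_chain, c.
  - apply cond3s_of_chain, c2_chain, c.
  - apply (cond4s_of_chain H hS), c1_chain, c.
  - apply cond5s_of_chain, c2_chain, c.
  - apply cond6s_of_cond3s, c.
  - apply (cond5s_of_cond4s H hS), c.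
  - apply (cond4s_of_cond5s H hS), c.
  - apply (cond4's_of_cond4s H hS), c.
  - apply (cond5's_of_cond5s H hS), c.
Qed.
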